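(* Let $M=(Q,\underline q,\Sigma_I,\Sigma_O,h)$ be a deterministic, completely specified prime FSM with $n=|Q|\ge 2$ states and output function $\omega_M$, and let $R=R(q_1,x_1,Z_1)\wedge\dots\wedge R(q_k,x_k,Z_k)$ be a composite requirement on $M$ (with the pairs $(q_i,x_i)$ pairwise distinct, $\omega_M(q_i,x_i)\in Z_i\subsetneq\Sigma_O$). Let $M_1$ be the requirement abstraction of $M$, let $V\subseteq\Sigma_I^*$ with $\varepsilon\in V$ be a state cover of $M$, let $m\ge n$ be an integer, and let $A,B,C$, $\Delta_M$, $\Delta_{M_1}$, $A(M)$, $B(M_1)$, $C(M_1)$ be as defined in the context. Let $S=(S,\underline s,\Sigma_I,\Sigma_O,h_S)$ be a minimal, completely specified DFSM with $|S|\le m$. Let $TS\subseteq\Sigma_I^*$ be any test suite satisfying (1) $V.\bigcup_{i=0}^{m-n+1}\Sigma_I^i\subseteq TS$, and (2) for all $(\alpha,\beta)\in A(M)\cup B(M_1)\cup C(M_1)$ there exists $\gamma\in\Delta_M(\alpha,\beta)$ with $\alpha.\gamma\in TS$ and $\beta.\gamma\in TS$. Then if $S$ passes $TS$ (i.e. $\omega_S(\underline s,\bar x)=\omega_M(\underline q,\bar x)$ for every $\bar x\in TS$), it follows that $S\models R$.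
   Context: FSMs, DFSMs, languages, the extended transition/output functions $\delta,\omega$, the notation $q\text{-after-}\bar x=\delta(q,\bar x)$ and prime machines are as usual: a completely specified DFSM has for every (state,input) exactly one transition, given by $\delta(q,x)$ and output $\omega(q,x)$; these extend to input sequences by $\delta(q,\varepsilon)=q$, $\delta(q,x.\bar x)=\delta(\delta(q,x),\bar x)$, $\omega(q,\varepsilon)=\varepsilon$, $\omega(q,x.\bar x)=\omega(q,x).\omega(\delta(q,x),\bar x)$. A prime machine has minimal number of states among language-equivalent DFSMs. A state cover of $M$ is a set $V\subseteq\Sigma_I^*$ such that every state $q$ equals $\underline q\text{-after-}v$ for some $v\in V$. For sets of traces, $X.Y=\{x.y\mid x\in X,y\in Y\}$. Requirements: $\Pi(q)=\{\bar x\in\Sigma_I^*\mid \underline q\text{-after-}\bar x=q\}$ (computed in $M$). $S\models R(q,x,Z)$ iff $\omega_S(\underline s\text{-after-}\pi,x)\in Z$ for all $\pi\in\Pi(q)$; $S\models R$ for a conjunction iff $S$ satisfies every conjunct. Requirement abstraction $M_1$: the completely specified DFSM with state set $Q$, initial state $\underline q$, input alphabet $\Sigma_I$, output alphabet $\{\ast,Z_1,\dots,Z_k\}$ where $\ast=\Sigma_O$, transition function equal to that of $M$, and output function $\omega_{M_1}(q_i,x_i)=Z_i$ for $i=1,\dots,k$ and $\omega_{M_1}(q,x)=\ast$ for all other $(q,x)\in Q\times\Sigma_I$. Trace-pair sets: $A=V\times V$; $B=V\times\big(V.\bigcup_{i=1}^{m-n+1}\Sigma_I^i\big)$; $C=\{(\alpha,\beta)\mid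 \alpha$ is a prefix of $\beta$, $\alpha,\beta\in V.\bigcup_{i=1}^{m-n+1}\Sigma_I^i\}$. For input traces $\alpha,\beta$: $\Delta_M(\alpha,\beta)=\{\gamma\in\Sigma_I^*\mid\omega_M(\underline q\text{-after-}\alpha,\gamma)\ne\omega_M(\underline q\text{-after-}\beta,\gamma)\}$ and $\Delta_{M_1}(\alpha,\beta)$ is defined analogously with $\omega_{M_1}$. For a set $P$ of trace pairs, $P(M)=\{(\alpha,\beta)\in P\mid\Delta_M(\alpha,\beta)\neq\varnothing\}$ and $P(M_1)=\{(\alpha,\beta)\in P\mid\Delta_{M_1}(\alpha,\beta)\neq\varnothing\}$. *)

From mathcomp Require Import all_boot.
Set Implicit Arguments. Unset Strict Implicit. Unset Printing Implicit Defensive.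

Record dfsm (Q I O : Type) := DFSM {
  init : Q;
  trans : Q -> I -> Q;
  out : Q -> I -> O }.

Section FSM.
Variables (Q I O : Type) (M : dfsm Q I O).

Fixpoint delta_star (q : Q) (xs : seq I) : Q :=
  if xs is x :: xs' then delta_star (trans M q x) xs' else q.

Fixpoint omega_star (q : Q) (xs : seq I) : seq O :=
  if xs is x :: xs' then out M q x :: omega_star (trans M q x) xs' else [::].

Definition after (xs : seq I) : Q := delta_star (init M) xs.

Definition Pi (q : Q) (xs : seq I) : Prop := after xs = q.

Definition state_cover (V : seq I -> Prop) : Prop :=
  forall q : Q, exists2 v, V v & after v = q.
End FSM.

Definition lang (Q I O : Type) (M : dfsm Q I O) (xs : seq I) (ys : seq O) : Prop :=
  ys = omega_star M (init M) xs.

Definition lang_equiv (Q T I O : Type) (M : dfsm Q I O) (S : dfsm T I O) : Prop :=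
  forall xs ys, lang M xs ys <-> lang S xs ys.

Definition prime_fsm (Q I O : finType) (M : dfsm Q I O) : Prop :=
  forall (T : finType) (S : dfsm T I O), lang_equiv M S -> #|Q| <= #|T|.

Definition requirement (Q I O : finType) := seq (Q * I * {set O}).

Definition wf_requirement (Q I O : finType) (M : dfsm Q I O)
    (R : requirement Q I O) : Prop :=
  uniq [seq r.1 | r <- R] /\
  (forall r, r \in R -> out M r.1.1 r.1.2 \in r.2) /\
  (forall r, r \in R -> r.2 \proper [set: O]).

Definition sat_req1 (Q T I O : finType) (M : dfsm Q I O) (S : dfsm T I O)
    (q : Q) (x : I) (Z : {set O}) : Prop :=
  forall pi, Pi M q pi -> out S (after S pi) x \in Z.

Definition sat_req (Q T I O : finType) (M : dfsm Q I O) (S : dfsm T I O)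
    (R : requirement Q I O) : Prop :=
  forall r, r \in R -> sat_req1 M S r.1.1 r.1.2 r.2.

(* requirement abstraction M1: output alphabet {*, Z_1, ..., Z_k} modelled
   inside {set O}, where * = Sigma_O = [set: O] *)
Definition abs_out (Q I O : finType) (R : requirement Q I O) (q : Q) (x : I)
    : {set O} :=
  if [seq r.2 | r <- R & r.1 == (q, x)] is Z :: _ then Z else [set: O].

Definition req_abstraction (Q I O : finType) (M : dfsm Q I O)
    (R : requirement Q I O) : dfsm Q I {set O} :=
  DFSM (init M) (trans M) (abs_out R).

Definition Delta (Q I O : Type) (M : dfsm Q I O) (alpha beta gamma : seq I)
    : Prop :=
  omega_star M (after M alpha) gamma <> omega_star M (after M beta) gamma.

Definition Delta_ne (Q I O : Type) (M : dfsm Q I O) (alpha beta : seq I)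
    : Prop := exists gamma, Delta M alpha beta gamma.

Definition ext_set (I : Type) (V : seq I -> Prop) (lo hi : nat) (t : seq I)
    : Prop :=
  exists v w, [/\ V v, t = v ++ w & lo <= size w <= hi].

Definition pairsA (I : Type) (V : seq I -> Prop) (a b : seq I) : Prop :=
  V a /\ V b.
Definition pairsB (I : Type) (V : seq I -> Prop) (k : nat) (a b : seq I) : Prop :=
  V a /\ ext_set V 1 k b.
Definition pairsC (I : eqType) (V : seq I -> Prop) (k : nat) (a b : seq I)
    : Prop :=
  [/\ prefix a b, ext_set V 1 k a & ext_set V 1 k b].

From mathcomp Require Import all_boot zify.
From Stdlib Require Import Classical IndefiniteDescription.
Set Implicit Arguments. Unset Strict Implicit. Unset Printing Implicit Defensive.

(* Call two input traces [a], [b] similar if they lead the implementation S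
   to the same state and the requirement abstraction M1 to indistinguishable
   states.  The heart of the proof is a reduction lemma: every input trace is
   similar to a trace [v ++ w] with [v] in the state cover V and [|w| < k],
   where k = m - n + 1.  It is proved by induction on the trace: appending an
   input preserves similarity, and whenever the suffix reaches length k, the
   m + 1 traces [vq q] (one per state q of M) and [v ++ w_1..i] (1 <= i <= k)
   cannot reach pairwise distinct states of S, which has at most m states.
   A collision between two cover traces is impossible (M is prime, so the pair
   is in A(M) and separated by the test suite); any other collision is a pair
   of B or C which the suite would separate unless it is M1-indistinguishable,
   and then the suffix can be shortened.  Finally, for a reduced trace
   [v ++ w] the test [v ++ w ++ x] lies in the suite, so S produces M's output,
   which lies in the set prescribed by M1, i.e. in the requirement set Z. *)

Section Traces.
Variables (Q I O : Type) (M : dfsm Q I O).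

Lemma delta_star_cat q a b :
  delta_star M q (a ++ b) = delta_star M (delta_star M q a) b.
Proof. by elim: a q => //= x a IH q. Qed.

Lemma omega_star_cat q a b :
  omega_star M q (a ++ b) = omega_star M q a ++ omega_star M (delta_star M q a) b.
Proof. by elim: a q => //= x a IH q; rewrite IH. Qed.

Lemma size_omega_star q a : size (omega_star M q a) = size a.
Proof. by elim: a q => //= x a IH q; rewrite IH. Qed.

Lemma after_cat a b : after M (a ++ b) = delta_star M (after M a) b.
Proof. exact: delta_star_cat. Qed.

Definition indist (q1 q2 : Q) : Prop :=
  forall g, omega_star M q1 g = omega_star M q2 g.

Lemma indist_delta q1 q2 u :
  indist q1 q2 -> indist (delta_star M q1 u) (delta_star M q2 u).
Proof.
elim: u q1 q2 => //= y u IH q1 q2 E; apply: IH => g.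
by case: (E (y :: g)).
Qed.

End Traces.

Lemma state_cover_fun (Q I O : Type) (M : dfsm Q I O) (V : seq I -> Prop) :
  state_cover M V -> exists vq : Q -> seq I, forall q, V (vq q) /\ after M (vq q) = q.
Proof.
move=> cover; apply: (functional_choice (fun q v => V v /\ after M v = q)) => q.
by case: (cover q) => v Vv <-; exists v.
Qed.

Section Prime.
Variables (Q I O : finType) (M : dfsm Q I O).

(* Two indistinguishable distinct states can be merged: redirecting every
   transition into [q2] towards [q1] yields an equivalent machine without [q2]. *)
Lemma merge_indist_states q1 q2 :
  q1 != q2 -> indist M q1 q2 -> exists M' : dfsm {q : Q | q != q2} I O, lang_equiv M M'.
Proof.
move=> ne E.
pose f (q : Q) : {q : Q | q != q2} := insubd (exist _ q1 ne) q.
have f_indist q : indist M (val (f q)) q.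
  move=> g; rewrite /f val_insubd; case: ifP => // /negbFE /eqP ->; exact: E.
pose M' := DFSM (f (init M)) (fun t x => f (trans M (val t) x))
                (fun t x => out M (val t) x).
have omega_M' t g : omega_star M' t g = omega_star M (val t) g.
  by elim: g t => //= x g IH t; rewrite IH f_indist.
by exists M' => xs ys; rewrite /lang /= omega_M' f_indist.
Qed.

Lemma prime_distinguishable q1 q2 :
  prime_fsm M -> q1 <> q2 -> exists g, omega_star M q1 g <> omega_star M q2 g.
Proof.
move=> prM /eqP ne; apply: not_all_ex_not => E.
have [M' equiv] := merge_indist_states ne E.
have := prM _ M' equiv; rewrite card_sig.
have -> : #|[pred x | x != q2]| = #|predC1 q2| by apply: eq_card.
rewrite cardC1; have : 0 < #|Q| by apply/card_gt0P; exists q1.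
lia.
Qed.

End Prime.

Section Abstraction.
Variables (Q I O : finType) (M : dfsm Q I O) (R : requirement Q I O).
Hypothesis wf : wf_requirement M R.

Lemma after_abstraction a : after (req_abstraction M R) a = after M a.
Proof. by rewrite /after /=; elim: a (init M) => //= x a IH q. Qed.

Lemma abs_out_in q x : out M q x \in abs_out R q x.
Proof.
case: wf => _ [out_in _]; rewrite /abs_out.
case E: [seq r.2 | r <- R & r.1 == (q, x)] => [|Z l]; first by rewrite in_setT.
have : Z \in [seq r.2 | r <- R & r.1 == (q, x)] by rewrite E mem_head.
case/mapP => r; rewrite mem_filter => /andP [/eqP e rR] ->.
by have := out_in r rR; rewrite e.
Qed.

Lemma key_inj (A B : eqType) (s : seq (A * B)) p p' :
  uniq [seq p.1 | p <- s] -> p \in s -> p' \in s -> p.1 = p'.1 -> p = p'.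
Proof.
elim: s => //= p0 s IH /andP [notin_s uniq_s]; rewrite !inE.
case/orP => [/eqP ->|ps]; case/orP => [/eqP ->|p's] // e.
- by case/negP: notin_s; rewrite e; exact: map_f.
- by case/negP: notin_s; rewrite -e; exact: map_f.
- exact: IH.
Qed.

(* Since the pairs (q_i, x_i) are distinct, M1 outputs exactly Z_i at (q_i, x_i). *)
Lemma abs_out_req r : r \in R -> abs_out R r.1.1 r.1.2 = r.2.
Proof.
case: wf => uniqR _ rR; rewrite /abs_out -surjective_pairing.
have : r \in [seq p <- R | p.1 == r.1] by rewrite mem_filter eqxx.
case E: [seq p <- R | p.1 == r.1] => [|r' l] //= _.
have : r' \in [seq p <- R | p.1 == r.1] by rewrite E mem_head.
rewrite mem_filter => /andP [/eqP e r'R].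
by rewrite (key_inj uniqR r'R rR e).
Qed.

End Abstraction.

Section Testing.
Variables (Q T I O : Type) (M : dfsm Q I O) (S : dfsm T I O) (TS : seq I -> Prop).

Definition passes : Prop :=
  forall xs, TS xs -> omega_star S (init S) xs = omega_star M (init M) xs.

Definition separated (a b : seq I) : Prop :=
  exists gamma, [/\ Delta M a b gamma, TS (a ++ gamma) & TS (b ++ gamma)].

Hypothesis pass : passes.

Lemma passes_suffix a g :
  TS (a ++ g) -> omega_star S (after S a) g = omega_star M (after M a) g.
Proof.
move=> /pass; rewrite !omega_star_cat => /(congr1 (drop (size a))).
by rewrite !drop_size_cat ?size_omega_star.
Qed.

Lemma separated_after a b : separated a b -> after S a <> after S b.
Proof.
case=> g [D Ta Tb] E; apply: D.
by rewrite -(passes_suffix Ta) -(passes_suffix Tb) E.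
Qed.

End Testing.

(* Throughout, k plays the role of m - n + 1 and [vq q] is a cover trace of q. *)
Section Reduction.
Variables (Q T I O : finType) (M : dfsm Q I O) (R : requirement Q I O).
Variables (S : dfsm T I O) (V TS : seq I -> Prop) (k : nat) (vq : Q -> seq I).

Local Notation M1 := (req_abstraction M R).

Hypothesis prM : prime_fsm M.
Hypothesis V_nil : V [::].
Hypothesis vq_cover : forall q, V (vq q) /\ after M (vq q) = q.
Hypothesis k_gt0 : 0 < k.
Hypothesis card_T : #|T| < #|Q| + k.
Hypothesis pass : passes M S TS.
Hypothesis suite_separates : forall a b,
  (pairsA V a b /\ Delta_ne M a b) \/
  (pairsB V k a b /\ Delta_ne M1 a b) \/
  (pairsC V k a b /\ Delta_ne M1 a b) -> separated M TS a b.

Definition similar (a b : seq I) : Prop :=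
  after S a = after S b /\ indist M1 (after M a) (after M b).

Lemma similar_trans a b c : similar a b -> similar b c -> similar a c.
Proof. by case=> [Sab Mab] [Sbc Mbc]; split=> [|g]; rewrite ?Sab ?Mab. Qed.

Lemma similar_catr a b u : similar a b -> similar (a ++ u) (b ++ u).
Proof.
case=> [eS eM]; split; first by rewrite !after_cat eS.
by rewrite !after_cat; exact: indist_delta eM.
Qed.

(* A B- or C-pair reaching the same state of S is M1-indistinguishable:
   otherwise the suite would separate it. *)
Lemma similar_of_collision a b :
  pairsB V k a b \/ pairsC V k a b -> after S a = after S b -> similar a b.
Proof.
move=> P E; split=> // g; apply: NNPP => D.
apply: (separated_after pass (suite_separates _)) E; right.
have Dne : Delta_ne M1 a b by exists g; rewrite /Delta !after_abstraction.
by case: P => P; [left | right].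
Qed.

(* Cover traces of distinct states reach distinct states of S (pairs of A(M)). *)
Lemma cover_after_inj q q' : after S (vq q) = after S (vq q') -> q = q'.
Proof.
move=> E; apply: NNPP => ne.
have [g Dg] := prime_distinguishable prM ne.
apply: (separated_after pass (suite_separates _)) E; left.
split; first by split; [case: (vq_cover q) | case: (vq_cover q')].
by exists g; rewrite /Delta (proj2 (vq_cover q)) (proj2 (vq_cover q')).
Qed.

Definition reduced (t : seq I) : Prop :=
  exists v w, [/\ V v, size w < k & similar (v ++ w) t].

Section FullSuffix.
Variables (v ww : seq I).
Hypotheses (Vv : V v) (size_ww : size ww = k).

Lemma ext_prefix (i : 'I_k) : ext_set V 1 k (v ++ take i.+1 ww).
Proof.
have := ltn_ord i; exists v, (take i.+1 ww); split=> //.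
by rewrite size_takel; lia.
Qed.

(* Collision of a cover trace with a prefix: replace the prefix by the cover
   trace (a B-pair). *)
Lemma reduced_B q (i : 'I_k) :
  after S (vq q) = after S (v ++ take i.+1 ww) -> reduced (v ++ ww).
Proof.
move=> E; have [Vq _] := vq_cover q.
have sim := similar_of_collision (or_introl (conj Vq (ext_prefix i))) E.
exists (vq q), (drop i.+1 ww); split=> //; first by rewrite size_drop; lia.
have -> : v ++ ww = (v ++ take i.+1 ww) ++ drop i.+1 ww by rewrite -catA cat_take_drop.
exact: similar_catr.
Qed.

(* Collision of two prefixes: cut out the loop between them (a C-pair). *)
Lemma reduced_C (i j : 'I_k) :
  i < j -> after S (v ++ take i.+1 ww) = after S (v ++ take j.+1 ww) ->
  reduced (v ++ ww).
Proof.
move=> lt_ij E; have lt_jk := ltn_ord j.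
have pre : prefix (v ++ take i.+1 ww) (v ++ take j.+1 ww).
  rewrite prefix_catr // eqxx -(take_takel ww (ltnW lt_ij : i.+1 <= j.+1)).
  exact: prefix_take.
have sim := similar_of_collision (or_intror (And3 pre (ext_prefix i) (ext_prefix j))) E.
exists v, (take i.+1 ww ++ drop j.+1 ww); split=> //.
  by rewrite size_cat size_drop size_takel; lia.
have -> : v ++ ww = (v ++ take j.+1 ww) ++ drop j.+1 ww by rewrite -catA cat_take_drop.
rewrite catA; exact: similar_catr.
Qed.

(* Pigeonhole: the n cover traces and the k nonempty prefixes of [ww] cannot
   reach n + k > |T| distinct states of S. *)
Lemma reduced_full : reduced (v ++ ww).
Proof.
pose h (s : (Q + 'I_k)%type) : T :=
  match s with inl q => after S (vq q) | inr i => after S (v ++ take i.+1 ww) end.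
have : ~~ injectiveb h.
  apply/injectiveP => /leq_card; rewrite card_sum card_ord.
  by rewrite leqNgt card_T.
case/injectivePn => [[q|i] [[q'|j] ne /= E]].
- by case/eqP: ne; rewrite (cover_after_inj E).
- exact: reduced_B E.
- exact: reduced_B (esym E).
- case: (ltngtP i j) => [lt_ij|lt_ji|/val_inj eq_ij].
  + exact: reduced_C lt_ij E.
  + exact: reduced_C lt_ji (esym E).
  + by case/eqP: ne; rewrite eq_ij.
Qed.

End FullSuffix.

Lemma reduced_all t : reduced t.
Proof.
elim/last_ind: t => [|t y [v [w [Vv sw sim]]]].
  by exists [::], [::]; split=> //; split.
have sim' : similar (v ++ rcons w y) (rcons t y).
  by rewrite -!cats1 catA; exact: similar_catr.
case: (ltnP (size (rcons w y)) k) => [small|big].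
  by exists v, (rcons w y).
have size_k : size (rcons w y) = k by move: big; rewrite size_rcons; lia.
have [v' [w' [Vv' sw' sim'']]] := reduced_full Vv size_k.
by exists v', w'; split=> //; exact: (similar_trans sim'' sim').
Qed.

Lemma requirement_satisfied :
  wf_requirement M R -> (forall t, ext_set V 0 k t -> TS t) -> sat_req M S R.
Proof.
move=> wf coverTS r rR pi Hpi.
have [v [w [Vv sw [eS eM]]]] := reduced_all pi.
have test : TS ((v ++ w) ++ [:: r.1.2]).
  by apply: coverTS; exists v, (w ++ [:: r.1.2]); rewrite catA size_cat /= addn1.
have [out_eq] := passes_suffix pass test.
have [abs_eq] := eM [:: r.1.2].
rewrite -eS out_eq -(abs_out_req wf rR) -Hpi /= -abs_eq.
exact: abs_out_in.
Qed.

End Reduction.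

Theorem theorem2 (Q I O : finType) (M : dfsm Q I O) (R : requirement Q I O)
    (V : seq I -> Prop) (m : nat) (T : finType) (S : dfsm T I O)
    (TS : seq I -> Prop) :
  prime_fsm M -> 2 <= #|Q| ->
  wf_requirement M R ->
  V [::] -> state_cover M V ->
  #|Q| <= m ->
  prime_fsm S -> #|T| <= m ->
  (forall t, ext_set V 0 (m - #|Q| + 1) t -> TS t) ->
  (forall alpha beta,
     (pairsA V alpha beta /\ Delta_ne M alpha beta) \/
     (pairsB V (m - #|Q| + 1) alpha beta /\
        Delta_ne (req_abstraction M R) alpha beta) \/
     (pairsC V (m - #|Q| + 1) alpha beta /\
        Delta_ne (req_abstraction M R) alpha beta) ->
     exists gamma, [/\ Delta M alpha beta gamma,
                       TS (alpha ++ gamma) & TS (beta ++ gamma)]) ->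
  (forall xs, TS xs -> omega_star S (init S) xs = omega_star M (init M) xs) ->
  sat_req M S R.
Proof.
move=> prM _ wf V_nil cover le_Qm _ le_Tm coverTS separates pass.
have [vq vq_cover] := state_cover_fun cover.
apply: (requirement_satisfied prM V_nil vq_cover _ _ pass separates wf coverTS).
  by rewrite addn1.
by lia.
Qed.
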